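(* Let $D=(V,A)$ be a digraph with minimum in-degree at least 1, and let $\mathcal{L}D=\mathcal{L}_{(A',\phi)}D$ be a partial line digraph of $D$. Then (i) the number of kernels of $D$ equals the number of kernels of $\mathcal{L}D$; (ii) the number of quasikernels of $D$ is less than or equal to the number of quasikernels of $\mathcal{L}D$.
   Context: Digraphs are loopless and without multiple arcs. For a vertex $j$, $\omega^-(j)$ is the set of arcs with terminal vertex $j$; for a set of arcs $\Omega$, $H(\Omega)=\{y:(x,y)\in\Omega\}$. The arc $(x,y)$ is also written $xy$. $d(x,y)$ denotes directed distance and $d(x,K)=\min_{y\in K}d(x,y)$. Partial line digraph: given $D=(V,A)$ with minimum in-degree at least 1, take an arc subset $A'\subseteq A$ and a surjective map $\phi:A\to A'$ such that (i) $H(A')=V$; (ii) $\phi$ restricted to $A'$ is the identity, and for every vertex $j\in V$, $\phi(\omega^-(j))\subseteq\omega^-(j)\cap A'$. The partial line digraph $\mathcal{L}_{(A',\phi)}D$ has vertex set $A'$ and arc set $\{(ij,\phi(j,k)) : ij\in A',\ (j,k)\in A\}$. A $(k,l)$-kernel is a vertex set $K$ with $d(u,v)\ge k$ for all distinct $u,v\in K$ and $d(x,K)\le l$ for every vertex $x\notin K$. A kernel is a $(2,1)$-kernel (independent and every vertex outside has an out-neighbour inside); a quasikernel is a $(2,2)$-kernel. *)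

From mathcomp Require Import all_boot.
Set Implicit Arguments. Unset Strict Implicit. Unset Printing Implicit Defensive.

(* A digraph D = (V, A) with V : finType and arc relation e : rel V;
   the arc set A is {(x,y) | e x y}. Digraphs are loopless; multiple arcs
   cannot occur since arcs form a relation. *)
Definition loopless (V : finType) (e : rel V) : Prop := forall x, ~~ e x x.

Definition min_indeg_ge1 (V : finType) (e : rel V) : Prop :=
  forall j, exists i, e i j.

Fixpoint reach_le (V : finType) (e : rel V) (n : nat) (x y : V) : bool :=
  match n with
  | 0 => x == y
  | n'.+1 => (x == y) || [exists z, e x z && reach_le e n' z y]
  end.

(* (k,l)-kernel: d(u,v) >= k for distinct u,v in K, and d(x,K) <= l for x notin K *)
Definition kl_kernel (V : finType) (e : rel V) (k l : nat) (K : {set V}) : bool :=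
  [forall u in K, forall v in K, (u != v) ==> ~~ reach_le e k.-1 u v] &&
  [forall x, (x \notin K) ==> [exists y in K, reach_le e l x y]].

Definition kernel (V : finType) (e : rel V) (K : {set V}) := kl_kernel e 2 1 K.
Definition quasikernel (V : finType) (e : rel V) (K : {set V}) := kl_kernel e 2 2 K.

Definition num_kernels (V : finType) (e : rel V) : nat :=
  #|[set K : {set V} | kernel e K]|.
Definition num_quasikernels (V : finType) (e : rel V) : nat :=
  #|[set K : {set V} | quasikernel e K]|.

(* Partial line digraph data (A', phi) for D = (V, e):
   A' is a set of arcs, phi : V*V -> V*V (only its values on arcs matter).
   (i)  H(A') = V;
   (ii) phi is the identity on A', and for every vertex j,
        phi(omega^-(j)) is contained in omega^-(j) cap A'.
   (Surjectivity of phi : A -> A' follows from (ii), but is stated too.) *)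
Definition is_PLD_data (V : finType) (e : rel V) (A' : {set V * V})
    (phi : V * V -> V * V) : Prop :=
  [/\ (forall a, a \in A' -> e a.1 a.2),
      (forall y, exists x, (x, y) \in A'),
      (forall a, a \in A' -> phi a = a),
      (forall i j, e i j -> phi (i, j) \in A' /\ (phi (i, j)).2 = j)
    & (forall b, b \in A' -> exists i j, e i j /\ phi (i, j) = b)].

Definition PLvert (V : finType) (A' : {set V * V}) : finType :=
  {a : V * V | a \in A'}.

Definition PLarc (V : finType) (e : rel V) (A' : {set V * V})
    (phi : V * V -> V * V) : rel (PLvert A') :=
  fun a b => [exists k, e (val a).2 k && (phi ((val a).2, k) == val b)].
Arguments PLarc {V} e A' phi _ _.

From mathcomp Require Import all_boot.
Set Implicit Arguments. Unset Strict Implicit. Unset Printing Implicit Defensive.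

(* A set K of vertices of D lifts to the set of vertices of LD (arcs in A')
   whose head lies in K.  Since every arc of LD joins ij to an arc with head
   k where (j,k) is an arc of D, this lift sends kernels to kernels and
   quasikernels to quasikernels; it is injective because every vertex of D is
   the head of some arc of A'.  Conversely a kernel of LD is closed under
   "same head" (an arc outside it with the same head as an arc inside would
   have to point into the kernel, hence so would the arc inside), so it is the
   lift of its set of heads, which is a kernel of D. *)

Section Kernels.
Variables (T : finType) (r : rel T).

Definition independent (K : {set T}) :=
  forall u v, u \in K -> v \in K -> u != v -> ~~ r u v.

Lemma reach_le1 x y : reach_le r 1 x y = (x == y) || r x y.
Proof.
rewrite /=; case: (x =P y) => //= _.
apply/existsP/idP => [[z /andP[rxz /eqP <-]] // | rxy].
by exists y; rewrite rxy eqxx.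
Qed.

Lemma reach_le2 x y :
  reach_le r 2 x y = (x == y) || [exists z, r x z && ((z == y) || r z y)].
Proof.
change (reach_le r 2 x y) with
  ((x == y) || [exists z, r x z && reach_le r 1 z y]).
by under eq_existsb => z do rewrite reach_le1.
Qed.

Lemma kl_kernel2P l K :
  reflect (independent K /\
           forall x, x \notin K -> exists2 y, y \in K & reach_le r l x y)
          (kl_kernel r 2 l K).
Proof.
apply: (iffP andP) => [[/forallP indK /forallP domK] | [indK domK]]; split.
- move=> u v uK vK neq_uv; move: (indK u); rewrite uK => /forall_inP/(_ v vK).
  by rewrite neq_uv reach_le1 (negbTE neq_uv).
- by move=> x xK; move: (domK x); rewrite xK => /exists_inP.
- apply/forall_inP => u uK; apply/forall_inP => v vK; apply/implyP => neq_uv.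
  by rewrite reach_le1 (negbTE neq_uv) indK.
- by apply/forallP => x; apply/implyP => /domK [y yK rxy]; apply/exists_inP; exists y.
Qed.

Lemma kernelP K :
  reflect (independent K /\ forall x, x \notin K -> exists2 y, y \in K & r x y)
          (kernel r K).
Proof.
apply: (iffP (kl_kernel2P 1 K)) => -[indK domK]; split => // x /[dup] xK /domK.
- move=> [y yK]; rewrite reach_le1 => /orP[/eqP exy | rxy]; last by exists y.
  by rewrite exy yK in xK.
- by move=> [y yK rxy]; exists y; rewrite // reach_le1 rxy orbT.
Qed.

Lemma quasikernelP K :
  reflect (independent K /\ forall x, x \notin K -> exists2 y, y \in K &
             r x y \/ exists2 z, r x z & r z y)
          (quasikernel r K).
Proof.
apply: (iffP (kl_kernel2P 2 K)) => -[indK domK]; split => // x /[dup] xK /domK.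
- move=> [y yK]; rewrite reach_le2 => /orP[/eqP exy | /existsP[z]].
    by rewrite exy yK in xK.
  case/andP=> rxz /orP[/eqP zy | rzy]; exists y => //; first by left; rewrite -zy.
  by right; exists z.
- move=> [y yK reach_xy]; exists y; rewrite // reach_le2; apply/orP; right.
  case: reach_xy => [rxy | [z rxz rzy]]; apply/existsP.
    by exists y; rewrite rxy eqxx.
  by exists z; rewrite rxz rzy orbT.
Qed.

End Kernels.

Section PartialLineDigraph.
Variables (V : finType) (e : rel V) (A' : {set V * V}) (phi : V * V -> V * V).
Hypothesis e_loopless : loopless e.
Hypothesis A'_heads : forall y, exists x, (x, y) \in A'.
Hypothesis phi_arc : forall i j, e i j -> phi (i, j) \in A' /\ (phi (i, j)).2 = j.

Local Notation W := (PLvert A').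
Local Notation E := (PLarc e A' phi).

Definition head (a : W) : V := (val a).2.

Definition arc_vertex i j (eij : e i j) : W := exist _ (phi (i, j)) (phi_arc eij).1.

Lemma head_arc_vertex i j (eij : e i j) : head (arc_vertex eij) = j.
Proof. exact: (phi_arc eij).2. Qed.

Lemma PLarcE a b : E a b = e (head a) (head b) && (phi (head a, head b) == val b).
Proof.
apply/existsP/andP => [[k /andP[ek /eqP phi_k]] | [eab phi_b]].
  have head_b : head b = k by rewrite /head -phi_k (phi_arc ek).2.
  by rewrite head_b phi_k.
by exists (head b); rewrite eab phi_b.
Qed.

Lemma PLarc_arc_vertex a k (ek : e (head a) k) : E a (arc_vertex ek).
Proof. by apply/existsP; exists k; rewrite ek eqxx. Qed.

Lemma PLarc_head a b : E a b -> e (head a) (head b).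
Proof. by rewrite PLarcE => /andP[]. Qed.

Lemma PLarc_same_head a a' b : head a = head a' -> E a b -> E a' b.
Proof. by move=> same_head; rewrite !PLarcE same_head. Qed.

Lemma exists_head y : exists a : W, head a = y.
Proof. by have [x xy] := A'_heads y; exists (exist _ (x, y) xy). Qed.

Definition lift_set (K : {set V}) : {set W} := [set a | head a \in K].

Lemma lift_set_inj : injective lift_set.
Proof.
move=> K1 K2 eqK; apply/setP => y; have [a <-] := exists_head y.
by have := congr1 (fun S : {set W} => a \in S) eqK; rewrite !inE.
Qed.

Lemma independent_lift K : independent e K -> independent E (lift_set K).
Proof.
move=> indK a b; rewrite !inE => aK bK neq_ab; apply/negP => /[dup] Eab.
move/PLarc_head; have [same_head | neq_heads] := eqVneq (head a) (head b).
  by rewrite same_head (negbTE (e_loopless _)).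
by apply/negP; exact: indK.
Qed.

Lemma kernel_lift K : kernel e K -> kernel E (lift_set K).
Proof.
move=> /kernelP[indK domK]; apply/kernelP; split; first exact: independent_lift.
move=> a; rewrite inE => /domK[y yK ey].
by exists (arc_vertex ey); [rewrite inE head_arc_vertex | exact: PLarc_arc_vertex].
Qed.

Lemma quasikernel_lift K : quasikernel e K -> quasikernel E (lift_set K).
Proof.
move=> /quasikernelP[indK domK]; apply/quasikernelP; split.
  exact: independent_lift.
move=> a; rewrite inE => /domK[y yK [ey | [z ez zy]]].
  exists (arc_vertex ey); first by rewrite inE head_arc_vertex.
  by left; exact: PLarc_arc_vertex.
have ez'y : e (head (arc_vertex ez)) y by rewrite head_arc_vertex.
exists (arc_vertex ez'y); first by rewrite inE head_arc_vertex.
by right; exists (arc_vertex ez); exact: PLarc_arc_vertex.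
Qed.

Definition heads (K' : {set W}) : {set V} := [set head b | b in K'].

Lemma kernel_same_head K' a b :
  kernel E K' -> b \in K' -> head a = head b -> a \in K'.
Proof.
move=> /kernelP[indK' domK'] bK' same_head; apply: contraT => /domK'[c cK' Eac].
have Ebc : E b c by exact: PLarc_same_head Eac.
have [eq_bc | neq_bc] := eqVneq b c.
  by move: (PLarc_head Ebc); rewrite eq_bc (negbTE (e_loopless _)).
by move: (indK' _ _ bK' cK' neq_bc); rewrite Ebc.
Qed.

Lemma kernel_lift_heads K' : kernel E K' -> K' = lift_set (heads K').
Proof.
move=> kerK'; apply/setP => a; rewrite inE; apply/idP/imsetP => [aK' | [b bK' ab]].
  by exists a.
exact: kernel_same_head kerK' bK' ab.
Qed.

Lemma kernel_heads K' : kernel E K' -> kernel e (heads K').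
Proof.
move=> /[dup] kerK' /kernelP[indK' domK']; apply/kernelP; split.
  move=> _ _ /imsetP[b bK' ->] /imsetP[c cK' ->] neq_heads; apply/negP => ebc.
  have cK'_bc : arc_vertex ebc \in K'.
    by apply: kernel_same_head kerK' cK' _; rewrite head_arc_vertex.
  have neq_b : b != arc_vertex ebc.
    by apply: contra_neq neq_heads => ->; rewrite head_arc_vertex.
  by move: (indK' _ _ bK' cK'_bc neq_b); rewrite PLarc_arc_vertex.
move=> x xK; have [a head_a] := exists_head x.
have aK' : a \notin K'.
  by rewrite (kernel_lift_heads kerK') inE head_a.
have [c cK' Eac] := domK' a aK'.
by exists (head c); [exact: imset_f | rewrite -head_a; exact: PLarc_head].
Qed.

Lemma kernels_PLarc :
  [set K' | kernel E K'] = lift_set @: [set K | kernel e K].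
Proof.
apply/setP => K'; rewrite inE; apply/idP/imsetP => [kerK' | [K]].
  by exists (heads K'); rewrite ?inE ?kernel_heads // -kernel_lift_heads.
by rewrite inE => kerK ->; exact: kernel_lift.
Qed.

End PartialLineDigraph.

Theorem corollary2p5 (V : finType) (e : rel V) (A' : {set V * V})
    (phi : V * V -> V * V) :
  loopless e -> min_indeg_ge1 e -> is_PLD_data e A' phi ->
  num_kernels e = num_kernels (PLarc e A' phi) /\
  num_quasikernels e <= num_quasikernels (PLarc e A' phi).
Proof.
move=> e_loopless _ [_ A'_heads _ phi_arc _]; split.
  rewrite /num_kernels (kernels_PLarc e_loopless A'_heads phi_arc).
  by rewrite card_imset //; exact: lift_set_inj.
rewrite /num_quasikernels -(card_imset _ (lift_set_inj A'_heads)).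
apply/subset_leq_card/subsetP => K' /imsetP[K]; rewrite inE => qkerK ->.
by rewrite inE quasikernel_lift.
Qed.
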